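(* Let $H=(S_1,\dots,S_\ell)$ be a partial route. Then there exist $(\alpha,\beta)\in\mathcal{A}$ such that the projected scenario recourse inequality $$\sum_{v\in V_+:\,w_v>0}\phi_v(\alpha,\beta)\,\theta_v\ \ge\ \sum_{\xi\in[N]}\sum_{\emptyset\ne S\subseteq V_+}\alpha^\xi_S\,x(E(S))+\nu(\alpha,\beta)$$ dominates the inequality $\theta(V_+(H))\ge\mathcal{L}^*(H)\cdot W_{OF}(x;H)$, in the sense that for every $\bar x\in\mathcal{X}$, every $\theta\in\mathbb{R}^{V_+}_{\ge0}$ satisfying the projected inequality at $x=\bar x$ satisfies $\theta(V_+(H))\ge\mathcal{L}^*(H)\,W_{OF}(\bar x;H)$. In particular, $\theta(V_+(H))\ge\mathcal{L}^*(H)\,W_{OF}(x;H)$ is valid for $\mathcal{P}$.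
   Context: $G=(V,E)$ complete undirected graph, $V=\{0\}\cup V_+$ ($V_+$ customers); capacity $C>0$; scenarios $\xi\in[N]$ with demands $d^\xi\in\mathbb{Q}^{V_+}_{\ge0}$ ($d^\xi(v)\le C$) and probabilities $p_\xi\ge0$, $\sum_\xi p_\xi=1$. $f(S)=\sum_{i\in S}f(i)$; $k_\xi(S)=\lceil d^\xi(S)/C\rceil$; $\bar d=\sum_\xi p_\xi d^\xi$. $E(S)$: edges with both ends in $S$; $E(S,T)$: edges with one end in $S$ and one in $T$; $\delta(S)$: edges with exactly one end in $S$. $\mathcal{X}$ is one of $\mathcal{X}_{\mathrm{sub}}=\{x\in[0,2]^E: x(\delta(v))=2\ \forall v\in V_+,\ x(E(S))\le|S|-1\ \forall\emptyset\ne S\subseteq V_+\}$ or $\mathcal{X}_{\mathrm{cvrp}}=\mathcal{X}_{\mathrm{sub}}\cap\{x:x(\delta(0))=2k,\ x(E(S))\le|S|-\lceil\bar d(S)/C\rceil\}$. Fixed $w\in\mathbb{Q}^{V_+}_{\ge0}$, $b\in\mathbb{Z}^{V_+}_{\ge0}$ such that for every route $R$ the set $\Pi(R)\cap[\mathbf 0,b]^N$ is nonempty, where $\Pi(R)$ is the set of integer $y\ge0$ in $\mathbb{R}^{[N]\times V_+}$ such that for each $\xi$ and route $R=(v_1,\dots,v_\ell)$ (with $v_0=v_{\ell+1}=0$) there exist $f_{(v_{i-1},v_i)}\in[0,C]$ and $g_{v_i}\ge0$ with $f_{(v_{i-1},v_i)}+d^\xi(v_i)=f_{(v_i,v_{i+1})}+g_{v_i}$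 and $g_{v_i}\le Cy^\xi_{v_i}$; $[\mathbf 0,b]^N=\{y:0\le y^\xi_v\le b_v\}$. A partial route $H=(S_1,\dots,S_\ell)$ is a tuple of pairwise disjoint nonempty customer sets with no index $i$ such that both $S_i$ and $S_{i+1}$ are non-singletons; $V_+(H)=\bigcup_iS_i$; $H'\subseteq H$ means $H'=(S_i,\dots,S_j)$ with $1\le i\le j\le\ell$. $x(H)=\sum_{i\in[\ell]}x(E(S_i))+\sum_{i\in[\ell-1]}x(E(S_i,S_{i+1}))$ and $W_{OF}(x;H)=1+(x(H)-|V_+(H)|+1)+\sum_{i\in\{2,\ell-1\}\cap[\ell]}(x(E(S_i))-|S_i|+1)$. For each $\xi$, $\mathcal{L}^*_\xi(H)=\min\{\sum_{v\in V_+(H)}w_vy_v:\ y(V_+(H'))\ge k_\xi(V_+(H'))-1\ \forall H'\subseteq H,\ y_v\le b_v\ \forall v\in V_+,\ y\ge0\}$, and $\mathcal{L}^*(H)=\sum_\xi p_\xi\mathcal{L}^*_\xi(H)$. Multipliers $\alpha=(\alpha^\xi_S)_{\xi,\emptyset\ne S\subseteq V_+}$, $\beta=(\beta^\xi_v)$; $\nu(\alpha,\beta)=\sum_\xi\sum_S\alpha^\xi_S(k_\xi(S)-|S|)+\sum_\xi\sum_v\beta^\xi_vb_v$; for $w_v>0$, $\phi_v(\alpha,\beta)=\big(\max_{\xi}\frac{\beta^\xi_v+\sum_{S\ni v}\alpha^\xi_S}{p_\xi w_v}\big)^+$ (where $(a)^+=\max\{a,0\}$). $\mathcal{A}$: set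 of $(\alpha,\beta)$ with $\alpha\ge0$, $\beta\le0$, and $\beta^\xi_v+\sum_{S\ni v}\alpha^\xi_S\le0$ for all $\xi$ and all $v$ with $w_v=0$. $\mathcal{P}$ is the set of $(x,\theta)$ with $x\in\mathcal{X}$ such that there exists $y\in[\mathbf 0,b]^N$ with $y^\xi(S)\ge k_\xi(S)+x(E(S))-|S|$ for all $\emptyset\ne S\subseteq V_+$, $\xi$, and $\theta\ge0$, $\theta_v\ge\sum_\xi p_\xi w_vy^\xi_v$ for all $v$. *)

From HB Require Import structures.
From mathcomp Require Import all_boot all_order all_algebra.
From mathcomp Require Import reals.
Set Implicit Arguments. Unset Strict Implicit. Unset Printing Implicit Defensive.
Import Order.TTheory GRing.Theory Num.Theory.
Local Open Scope ring_scope.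

(* Vertices V = 'I_n.+1, depot = ord0, customer v : 'I_n is vertex (lift ord0 v).
   Edges of the complete undirected graph = pairs (a,b) of vertices with a < b;
   an edge vector is x : 'I_n.+1 -> 'I_n.+1 -> R, only entries x a b with a < b
   being meaningful. *)

Section Defs.
Variables (R : realType) (n N : nat).
Variables (C : rat) (d : 'I_N -> 'I_n -> rat) (p : 'I_N -> R) (w : 'I_n -> rat)
          (b : 'I_n -> nat).

Definition cv (v : 'I_n) : 'I_n.+1 := lift ord0 v.
Definition liftS (S : {set 'I_n}) : {set 'I_n.+1} := cv @: S.

Definition xsum (x : 'I_n.+1 -> 'I_n.+1 -> R) (P : 'I_n.+1 -> 'I_n.+1 -> bool) : R :=
  \sum_(a : 'I_n.+1) \sum_(b0 : 'I_n.+1 | (a < b0)%N && P a b0) x a b0.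

Definition xE (x : 'I_n.+1 -> 'I_n.+1 -> R) (S : {set 'I_n}) : R :=
  xsum x (fun a b0 => (a \in liftS S) && (b0 \in liftS S)).
Definition xEST (x : 'I_n.+1 -> 'I_n.+1 -> R) (S T : {set 'I_n}) : R :=
  xsum x (fun a b0 => ((a \in liftS S) && (b0 \in liftS T))
                      || ((a \in liftS T) && (b0 \in liftS S))).
Definition xdelta (x : 'I_n.+1 -> 'I_n.+1 -> R) (A : {set 'I_n.+1}) : R :=
  xsum x (fun a b0 => (a \in A) != (b0 \in A)).

Definition kxi (xi : 'I_N) (S : {set 'I_n}) : int :=
  Num.ceil ((\sum_(v in S) d xi v) / C).
Definition dbar (S : {set 'I_n}) : R :=
  \sum_xi p xi * ratr (\sum_(v in S) d xi v).

Definition inXsub (x : 'I_n.+1 -> 'I_n.+1 -> R) : Prop :=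
  (forall a b0 : 'I_n.+1, (a < b0)%N -> 0 <= x a b0 <= 2) /\
  (forall v : 'I_n, xdelta x [set cv v] = 2) /\
  (forall S : {set 'I_n}, S != set0 -> xE x S <= #|S|%:R - 1).

Definition inXcvrp (k : nat) (x : 'I_n.+1 -> 'I_n.+1 -> R) : Prop :=
  inXsub x /\ xdelta x [set ord0] = 2 * k%:R /\
  (forall S : {set 'I_n}, S != set0 ->
     xE x S <= #|S|%:R - (Num.ceil (dbar S / ratr C))%:~R).

Definition inX (cvrp : bool) (k : nat) (x : 'I_n.+1 -> 'I_n.+1 -> R) : Prop :=
  if cvrp then inXcvrp k x else inXsub x.

Definition is_route (r : seq 'I_n) : Prop := r != [::] /\ uniq r.

(* y \in Pi(r): for each scenario, there are flows f_i on the arcs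
   (v_i, v_{i+1}), i = 0..l (v_0 = v_{l+1} = depot), in [0,C], and g >= 0 with
   f_{i-1} + d(v_i) = f_i + g_{v_i} and g_{v_i} <= C y_{v_i}.
   Here f i is the flow on arc (v_i, v_{i+1}) and onth r i = Some v_{i+1}. *)
Definition in_Pi (r : seq 'I_n) (y : 'I_N -> 'I_n -> nat) : Prop :=
  forall xi : 'I_N, exists (f : nat -> R) (g : 'I_n -> R),
    (forall i, (i <= size r)%N -> 0 <= f i <= ratr C) /\
    (forall v, 0 <= g v) /\
    (forall i (v : 'I_n), onth r i = Some v ->
       f i + ratr (d xi v) = f i.+1 + g v /\ g v <= ratr C * (y xi v)%:R).

Definition b_ok : Prop :=
  forall r, is_route r ->
    exists y : 'I_N -> 'I_n -> nat, in_Pi r y /\ (forall xi v, (y xi v <= b v)%N).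

(* Partial routes H = (S_1,...,S_l), stored as a seq (index i = S_(i+1)). *)
Definition Hs (H : seq {set 'I_n}) (i : nat) : {set 'I_n} := nth set0 H i.

Definition partial_route (H : seq {set 'I_n}) : Prop :=
  (0 < size H)%N /\
  (forall i, (i < size H)%N -> Hs H i != set0) /\
  (forall i j, (i < size H)%N -> (j < size H)%N -> i <> j ->
     [disjoint Hs H i & Hs H j]) /\
  (forall i, (i.+1 < size H)%N -> #|Hs H i| = 1%N \/ #|Hs H i.+1| = 1%N).

(* V_+(H') for the sub-partial-route H' = (S_(i+1),...,S_(j+1)), i <= j < l *)
Definition VHsub (H : seq {set 'I_n}) (i j : nat) : {set 'I_n} :=
  \bigcup_(i <= t < j.+1) Hs H t.
Definition VH (H : seq {set 'I_n}) : {set 'I_n} := VHsub H 0 (size H).-1.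

Definition xH (x : 'I_n.+1 -> 'I_n.+1 -> R) (H : seq {set 'I_n}) : R :=
  \sum_(0 <= i < size H) xE x (Hs H i)
  + \sum_(0 <= i < (size H).-1) xEST x (Hs H i) (Hs H i.+1).

(* W_OF(x;H); the paper's index set {2, l-1} \cap [l] becomes, 0-based,
   the indices i < l with i = 1 or i = l-2 (each counted once). *)
Definition WOF (x : 'I_n.+1 -> 'I_n.+1 -> R) (H : seq {set 'I_n}) : R :=
  1 + (xH x H - #|VH H|%:R + 1)
  + \sum_(0 <= i < size H | (i == 1)%N || (i.+2 == size H)%N)
       (xE x (Hs H i) - #|Hs H i|%:R + 1).

Definition Lfeas (H : seq {set 'I_n}) (xi : 'I_N) (y : 'I_n -> R) : Prop :=
  (forall i j, (i <= j)%N -> (j < size H)%N ->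
     \sum_(v in VHsub H i j) y v >= (kxi xi (VHsub H i j))%:~R - 1) /\
  (forall v, y v <= (b v)%:R) /\ (forall v, 0 <= y v).

Definition Lstar_xi (H : seq {set 'I_n}) (xi : 'I_N) : R :=
  reals.inf (fun r : R => exists y, Lfeas H xi y /\ r = \sum_(v in VH H) ratr (w v) * y v).

Definition Lstar (H : seq {set 'I_n}) : R := \sum_xi p xi * Lstar_xi H xi.

(* multipliers: alpha xi S (only S <> set0 used), beta xi v *)
Definition inA (alpha : 'I_N -> {set 'I_n} -> R) (beta : 'I_N -> 'I_n -> R) : Prop :=
  (forall xi S, S != set0 -> 0 <= alpha xi S) /\
  (forall xi v, beta xi v <= 0) /\
  (forall xi v, w v = 0 ->
     beta xi v + \sum_(S : {set 'I_n} | (S != set0) && (v \in S)) alpha xi S <= 0).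

Definition nu (alpha : 'I_N -> {set 'I_n} -> R) (beta : 'I_N -> 'I_n -> R) : R :=
  \sum_xi \sum_(S : {set 'I_n} | S != set0) alpha xi S * ((kxi xi S)%:~R - #|S|%:R)
  + \sum_xi \sum_v beta xi v * (b v)%:R.

(* phi_v = (max_xi (beta + sum_{S ni v} alpha) / (p_xi w_v))^+ ; the initial
   value 0 of the iterated max realises the positive part (.)^+. *)
Definition phi (alpha : 'I_N -> {set 'I_n} -> R) (beta : 'I_N -> 'I_n -> R) (v : 'I_n) : R :=
  \big[Num.max/0]_xi
     ((beta xi v + \sum_(S : {set 'I_n} | (S != set0) && (v \in S)) alpha xi S)
        / (p xi * ratr (w v))).

Definition proj_ineq (alpha : 'I_N -> {set 'I_n} -> R) (beta : 'I_N -> 'I_n -> R) (x : 'I_n.+1 -> 'I_n.+1 -> R) (theta : 'I_n -> R) : Prop :=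
  \sum_(v | 0 < w v) phi alpha beta v * theta v >=
  \sum_xi \sum_(S : {set 'I_n} | S != set0) alpha xi S * xE x S + nu alpha beta.

Definition inP (cvrp : bool) (k : nat) (x : 'I_n.+1 -> 'I_n.+1 -> R) (theta : 'I_n -> R) : Prop :=
  inX cvrp k x /\
  exists y : 'I_N -> 'I_n -> R,
    (forall xi v, 0 <= y xi v <= (b v)%:R) /\
    (forall xi (S : {set 'I_n}), S != set0 ->
       \sum_(v in S) y xi v >= (kxi xi S)%:~R + xE x S - #|S|%:R) /\
    (forall v, 0 <= theta v) /\
    (forall v, theta v >= \sum_xi p xi * ratr (w v) * y xi v).
End Defs.

From HB Require Import structures.
From mathcomp Require Import all_boot all_order all_algebra.
From mathcomp Require Import reals.
From mathcomp Require Import ring lra zify.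
Set Implicit Arguments. Unset Strict Implicit. Unset Printing Implicit Defensive.
Import Order.TTheory GRing.Theory Num.Theory.
Local Open Scope ring_scope.

(* For every sub-route H' of H, the subtour constraints, the degree equations
   at the singletons that border H', and the subtour slack of the sets with
   index 2 and l-1 give
     |V(H')| - 1 - x(E(V(H'))) <= 1 - W_OF(x; H).
   The recourse constraints y(V(H')) >= k(V(H')) + x(E(V(H'))) - |V(H')| thus
   imply the constraints of the LP defining L*_xi(H) relaxed by
   tau = 1 - W_OF(x; H); dividing y by 1 - tau and capping it at b restores
   feasibility, because the right-hand sides are integers.  This gives
   W_OF * L*_xi(H) <= w.y, hence validity for P.  For the projected
   inequality, alpha and beta are p_xi times a dual solution of the LP
     min { w.y + L*_xi(H) tau : y(V(H')) + tau >= k(V(H')) - 1,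
           0 <= y <= b, 0 <= tau <= 1 },
   whose value is L*_xi(H); the dual exists by the affine Farkas lemma, proved
   here by Fourier-Motzkin elimination, and the same estimate on sub-routes
   turns the projected inequality into the bound. *)

Section Farkas.
Variable R : realFieldType.

(* Vectors are indexed by [nat] so that Fourier-Motzkin elimination of the
   last coordinate is an induction on the dimension [m]. *)
Definition dotv (m : nat) (a y : nat -> R) : R := \sum_(j < m) a j * y j.

Lemma dotvS m a y : dotv m.+1 a y = dotv m a y + a m * y m.
Proof. by rewrite /dotv big_ord_recr. Qed.

Lemma eq_dotv m a a' y y' :
  (forall j, (j < m)%N -> a j * y j = a' j * y' j) -> dotv m a y = dotv m a' y'.
Proof. by move=> h; apply: eq_bigr => j _; rewrite h. Qed.

Lemma sum_pred1_mul (I : finType) (i0 : I) (g : I -> R) :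
  \sum_i (i == i0)%:R * g i = g i0.
Proof.
rewrite (bigD1 i0) //= eqxx mul1r big1 ?addr0 // => i /negbTE ->; exact: mul0r.
Qed.

Lemma sum_combination (I K : finType) (lam : K -> R) (u : K -> I -> R) (g : I -> R) :
  \sum_i (\sum_k lam k * u k i) * g i = \sum_k lam k * \sum_i u k i * g i.
Proof.
under eq_bigr => i _ do rewrite mulr_suml.
rewrite exchange_big /=; apply: eq_bigr => k _; rewrite mulr_sumr.
by apply: eq_bigr => i _; rewrite mulrA.
Qed.

Lemma fourier_motzkin_lift (I : finType) (e r : I -> R) :
  (forall k, e k = 0 -> r k <= 0) ->
  (forall p q, 0 < e p -> e q < 0 -> - e q * r p + e p * r q <= 0) ->
  exists t, forall i, r i <= e i * t.
Proof.
move=> hz hpq.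
pose B := - \sum_i `|r i / e i|.
exists (\big[Num.max/B]_(p | 0 < e p) (r p / e p)) => i.
have [ei0|ei0|ei0] := ltgtP (e i) 0; last by rewrite ei0 mul0r; exact: hz i ei0.
- rewrite -ler_ndivlMl // mulrC; apply: bigmax_le.
    apply: le_trans (_ : - `|r i / e i| <= _); last by rewrite lerNl -normrN ler_norm.
    by rewrite /B lerN2 (bigD1 i) //= lerDl sumr_ge0.
  move=> p ep; rewrite -subr_le0.
  have epi : 0 < e p * - e i by rewrite mulr_gt0 ?oppr_gt0.
  rewrite -(pmulr_rle0 _ epi).
  have := hpq p i ep ei0; congr (_ <= _).
  by field; rewrite ltr0_neq0 // lt0r_neq0.
- by rewrite -ler_pdivrMl // mulrC; apply: le_bigmax_cond.
Qed.

Section FourierMotzkinStep.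
Variables (I : finType) (e : I -> R).

(* Row [inl (p, q)] combines a row with [e p > 0] and one with [e q < 0] so
   that [e] cancels; row [inr k] keeps a row with [e k = 0]. *)
Definition fm_weight (k : (I * I) + I) (i : I) : R :=
  match k with
  | inl (p, q) => if (0 < e p) && (e q < 0) then
                    (i == p)%:R * - e q + (i == q)%:R * e p else 0
  | inr k => if e k == 0 then (i == k)%:R else 0
  end.

Lemma fm_weight_ge0 k i : 0 <= fm_weight k i.
Proof.
case: k => [[p q]|k] /=; last by case: ifP; rewrite ?ler0n.
case: ifP => // /andP[ep eq].
by rewrite addr_ge0 // mulr_ge0 ?ler0n ?oppr_ge0 ?ltW.
Qed.

Lemma sum_fm_weight k (g : I -> R) :
  \sum_i fm_weight k i * g i =
  match k with
  | inl (p, q) => if (0 < e p) && (e q < 0) then - e q * g p + e p * g q else 0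
  | inr k => if e k == 0 then g k else 0
  end.
Proof.
case: k => [[p q]|k] /=; case: ifP => _;
  try by rewrite big1 // => i _; rewrite mul0r.
  under eq_bigr => i _ do rewrite mulrDl -!mulrA.
  by rewrite big_split /= !sum_pred1_mul.
exact: sum_pred1_mul.
Qed.

Lemma sum_fm_weight_elim k : \sum_i fm_weight k i * e i = 0.
Proof.
rewrite sum_fm_weight; case: k => [[p q]|k]; case: ifP => //; first by move=> _; ring.
by move/eqP.
Qed.

End FourierMotzkinStep.

Lemma infeasible_certificate m (I : finType) (a : I -> nat -> R) (c : I -> R) :
  ~ (exists y, forall i, c i <= dotv m (a i) y) ->
  exists lam : I -> R, [/\ forall i, 0 <= lam i,
    forall j, (j < m)%N -> \sum_i lam i * a i j = 0 & 0 < \sum_i lam i * c i].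
Proof.
elim: m I a c => [|m IH] I a c infeas.
  have [i ci] : exists i, 0 < c i.
    have [/existsP //|/existsPn c_le0] := boolP [exists i, 0 < c i].
    by case: infeas; exists (fun _ => 0) => i; rewrite /dotv big_ord0 leNgt c_le0.
  by exists (fun k => (k == i)%:R); split=> [k|//|]; rewrite ?ler0n ?sum_pred1_mul.
pose e i := a i m.
pose a' k j := \sum_i fm_weight e k i * a i j.
pose c' k := \sum_i fm_weight e k i * c i.
have [[y' hy']|infeas'] := boolp.pselect (exists y, forall k, c' k <= dotv m (a' k) y).
  exfalso; apply: infeas.
  pose r i := c i - dotv m (a i) y'.
  have dot_a' k : dotv m (a' k) y' = \sum_i fm_weight e k i * dotv m (a i) y'.
    by rewrite /dotv -sum_combination; apply: eq_bigr => j _; rewrite mulrC.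
  have hy'k k : \sum_i fm_weight e k i * r i <= 0.
    rewrite /r; under eq_bigr => i _ do rewrite mulrBr.
    by rewrite sumrB -dot_a' subr_le0 hy'.
  have [t ht] : exists t, forall i, r i <= e i * t.
    apply: fourier_motzkin_lift => [k ek|p q ep eq].
      by have := hy'k (inr k); rewrite sum_fm_weight ek eqxx.
    by have := hy'k (inl (p, q)); rewrite sum_fm_weight ep eq.
  exists (fun j => if j == m then t else y' j) => i.
  rewrite dotvS eqxx (@eq_dotv _ _ (a i) _ y') => [|j jm]; last by rewrite ltn_eqF.
  by have := ht i; rewrite /r /e lerBlDl.
have [lam' [lam'_ge0 lam'_a lam'_c]] := IH _ a' c' infeas'.
exists (fun i => \sum_k lam' k * fm_weight e k i); split.
- by move=> i; apply: sumr_ge0 => k _; rewrite mulr_ge0 ?fm_weight_ge0.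
- move=> j; rewrite ltnS leq_eqVlt => /orP[/eqP->|jm]; rewrite sum_combination.
    by rewrite big1 // => k _; rewrite sum_fm_weight_elim mulr0.
  exact: lam'_a.
- by rewrite sum_combination.
Qed.

Lemma farkas_homogenized m (I : finType) (a : I -> nat -> R) (c : I -> R)
    (f : nat -> R) (g : R) :
  (exists y0, forall i, c i <= dotv m (a i) y0) ->
  (forall y, (forall i, c i <= dotv m (a i) y) -> g <= dotv m f y) ->
  ~ exists z t, [/\ 0 <= t, forall i, c i * t <= dotv m (a i) z
                  & dotv m f z <= g * t - 1].
Proof.
move=> [y0 hy0] himp [z [t [t_ge0 hz hfz]]].
have [t_gt0|] := ltP 0 t.
  have dotv_div (u : nat -> R) : dotv m u (fun j => z j / t) = dotv m u z / t.
    by rewrite /dotv mulr_suml; apply: eq_bigr => j _; rewrite mulrA.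
  have := himp (fun j => z j / t); rewrite dotv_div ler_pdivlMr // => h.
  have /h : forall i, c i <= dotv m (a i) (fun j => z j / t).
    by move=> i; rewrite dotv_div ler_pdivlMr.
  lra.
rewrite le_eqVlt ltNge t_ge0 orbF => /eqP t0.
(* [z] is a recession direction along which [f] decreases without bound. *)
pose s := dotv m f y0 - g + 1.
have s_ge1 : 1 <= s by have := himp y0 hy0; rewrite /s; lra.
have dotv_ray (u : nat -> R) : dotv m u (fun j => y0 j + s * z j) = dotv m u y0 + s * dotv m u z.
  by rewrite /dotv mulr_sumr -big_split; apply: eq_bigr => j _; rewrite mulrDr mulrCA.
have ray_feas i : c i <= dotv m (a i) (fun j => y0 j + s * z j).
  rewrite dotv_ray; have := hz i; rewrite t0 mulr0 => h.
  by have := hy0 i; have := mulr_ge0 (ltW (lt_le_trans ltr01 s_ge1)) h; lra.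
have := himp _ ray_feas; rewrite dotv_ray.
rewrite t0 mulr0 in hfz.
have : s * dotv m f z <= s * -1 by apply: ler_wpM2l; lra.
rewrite /s; lra.
Qed.

Lemma farkas_affine m (I : finType) (a : I -> nat -> R) (c : I -> R)
    (f : nat -> R) (g : R) :
  (exists y0, forall i, c i <= dotv m (a i) y0) ->
  (forall y, (forall i, c i <= dotv m (a i) y) -> g <= dotv m f y) ->
  exists lam : I -> R, [/\ forall i, 0 <= lam i,
    forall j, (j < m)%N -> \sum_i lam i * a i j = f j & g <= \sum_i lam i * c i].
Proof.
move=> feas himp.
(* Rows of the homogenized system in the variables [(z, t)], [t] at index [m]. *)
pose a2 (k : I + bool) (j : nat) : R := match k with
  | inl i => if j == m then - c i else a i j
  | inr true => (j == m)%:R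
  | inr false => if j == m then g else - f j end.
pose c2 (k : I + bool) : R := if k is inr false then 1 else 0.
have infeas : ~ exists z, forall k, c2 k <= dotv m.+1 (a2 k) z.
  move=> [z hz]; apply: (farkas_homogenized feas himp); exists z, (z m); split.
  - by have := hz (inr true); rewrite dotvS /= eqxx mul1r /dotv big1 ?add0r // => j _;
      rewrite /a2 (ltn_eqF (ltn_ord j)) mul0r.
  - move=> i; have := hz (inl i); rewrite dotvS /= eqxx (@eq_dotv _ _ (a i) _ z).
      by rewrite mulNr subr_ge0.
    by move=> j jm; rewrite /a2 (ltn_eqF jm).
  - have := hz (inr false); rewrite dotvS /= eqxx (@eq_dotv _ _ (fun j => - f j) _ z).
      rewrite /dotv (eq_bigr (fun j : 'I_m => - (f j * z j))) ?sumrN => [|j _].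
        by lra.
      by rewrite mulNr.
    by move=> j jm; rewrite /a2 (ltn_eqF jm).
have [lam [lam_ge0 lam_a lam_c]] := infeasible_certificate infeas.
rewrite big_sumType /= big_bool /= big1 ?add0r in lam_c => [|i _]; last by rewrite mulr0.
rewrite mulr0 add0r mulr1 in lam_c.
have lam_t := lam_a m (ltnSn m).
rewrite big_sumType /= big_bool /= eqxx mulr1 in lam_t.
exists (fun i => lam (inl i) / lam (inr false)); split.
- by move=> i; apply: divr_ge0.
- move=> j jm; have := lam_a j (ltnW jm).
  rewrite big_sumType /= big_bool /= (ltn_eqF jm) mulr0 add0r mulrN => /eqP.
  rewrite subr_eq0 => /eqP lam_aj.
  under eq_bigr => i _ do rewrite mulrAC.
  by rewrite -mulr_suml lam_aj mulrC mulKf ?lt0r_neq0.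
- under eq_bigr => i _ do rewrite mulrAC.
  rewrite -mulr_suml ler_pdivlMr // mulrC.
  have : \sum_i lam (inl i) * - c i = - \sum_i lam (inl i) * c i.
    by rewrite -sumrN; apply: eq_bigr => i _; rewrite mulrN.
  have := lam_ge0 (inr true); lra.
Qed.

End Farkas.

Section EdgeSums.
Variables (R : realType) (n : nat) (x : 'I_n.+1 -> 'I_n.+1 -> R).
Hypothesis x_ge0 : forall a b : 'I_n.+1, (a < b)%N -> 0 <= x a b.

Lemma xsum_mkcond P : xsum x P =
  \sum_(a : 'I_n.+1) \sum_(b : 'I_n.+1) (if (a < b)%N && P a b then x a b else 0).
Proof. by apply: eq_bigr => a _; rewrite big_mkcond. Qed.

Lemma ler_xsum (P Q : 'I_n.+1 -> 'I_n.+1 -> bool) :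
  (forall a b : 'I_n.+1, (a < b)%N -> P a b -> Q a b) -> xsum x P <= xsum x Q.
Proof.
move=> PQ; rewrite !xsum_mkcond; apply: ler_sum => a _; apply: ler_sum => b _.
case ab: (a < b)%N => //=; case Pab: (P a b); first by rewrite (PQ _ _ ab Pab).
by case: (Q a b) => //; apply: x_ge0.
Qed.

Lemma xsum_predU (P Q : 'I_n.+1 -> 'I_n.+1 -> bool) :
  (forall a b : 'I_n.+1, (a < b)%N -> ~~ (P a b && Q a b)) ->
  xsum x P + xsum x Q = xsum x (fun a b => P a b || Q a b).
Proof.
move=> PQ; rewrite !xsum_mkcond -big_split; apply: eq_bigr => a _ /=.
rewrite -big_split; apply: eq_bigr => b _ /=.
case ab: (a < b)%N => /=; last by rewrite addr0.
by move: (PQ _ _ ab); case: (P a b); case: (Q a b); rewrite ?addr0 ?add0r.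
Qed.

Lemma mem_liftS (S : {set 'I_n}) (v : 'I_n) : (cv v \in liftS S) = (v \in S).
Proof. exact/mem_imset/lift_inj. Qed.

Lemma mem_liftSU (S T : {set 'I_n}) a :
  (a \in liftS (S :|: T)) = (a \in liftS S) || (a \in liftS T).
Proof. by rewrite /liftS imsetU inE. Qed.

Lemma liftS_disjoint (S T : {set 'I_n}) :
  [disjoint S & T] -> [disjoint liftS S & liftS T].
Proof. by rewrite /liftS imset_disjoint //; apply: lift_inj. Qed.

Lemma xE_set1 (v : 'I_n) : xE x [set v] = 0.
Proof.
rewrite /xE /xsum big1 // => a _; rewrite big1 // => b /andP[ab].
by rewrite /liftS imset_set1 !inE => /andP[/eqP ea /eqP eb]; rewrite ea eb ltnn in ab.
Qed.

Lemma xESTC (S T : {set 'I_n}) : xEST x S T = xEST x T S.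
Proof. by apply: eq_bigr => a _; apply: eq_bigl => b; rewrite orbC. Qed.

Lemma ler_xEST (S T S' T' : {set 'I_n}) :
  S \subset S' -> T \subset T' -> xEST x S T <= xEST x S' T'.
Proof.
move=> /(imsetS (@cv n))/subsetP SS' /(imsetS (@cv n))/subsetP TT'.
by apply: ler_xsum => a b _ /orP[]/andP[aS bT]; apply/orP; [left|right];
  rewrite ?SS' ?TT'.
Qed.

Lemma xE_setU (S T : {set 'I_n}) : [disjoint S & T] ->
  xE x S + xEST x S T + xE x T <= xE x (S :|: T).
Proof.
move/liftS_disjoint => dST.
have dF c : ~~ ((c \in liftS S) && (c \in liftS T)).
  by apply/negP => /andP[cS]; rewrite (disjointFr dST cS).
rewrite /xE /xEST !xsum_predU.
all: try (apply: ler_xsum => a b _; rewrite !mem_liftSU).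
all: try (move=> a b _; move: (dF a) (dF b)).
all: by move: (a \in liftS S) (a \in liftS T) (b \in liftS S) (b \in liftS T) => [] [] [] [].
Qed.

Lemma xEST_set1_le_xdelta (v : 'I_n) (S T : {set 'I_n}) :
  v \notin S -> v \notin T -> [disjoint S & T] ->
  xEST x [set v] S + xEST x [set v] T <= xdelta x [set cv v].
Proof.
move=> vS vT /liftS_disjoint dST.
have dF c : [&& ~~ ((c == cv v) && (c \in liftS S)), ~~ ((c == cv v) && (c \in liftS T))
              & ~~ ((c \in liftS S) && (c \in liftS T))].
  apply/and3P; split; apply/negP.
  - by move=> /andP[/eqP ->]; rewrite mem_liftS (negbTE vS).
  - by move=> /andP[/eqP ->]; rewrite mem_liftS (negbTE vT).
  - by move=> /andP[cS]; rewrite (disjointFr dST cS).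
rewrite /xEST /xdelta /liftS imset_set1 -/(liftS S) -/(liftS T) xsum_predU.
all: try apply: ler_xsum.
all: move=> a b _; rewrite ?inE; move: (dF a) (dF b).
all: by move: (a == cv v) (b == cv v) (a \in liftS S) (a \in liftS T)
  (b \in liftS S) (b \in liftS T) => [] [] [] [] [] [].
Qed.

End EdgeSums.

Lemma inXsub_ge0 (R : realType) n (x : 'I_n.+1 -> 'I_n.+1 -> R) :
  inXsub x -> forall a b : 'I_n.+1, (a < b)%N -> 0 <= x a b.
Proof. by case=> x_bnd _ a b ab; case/andP: (x_bnd a b ab). Qed.

Section PartialRoute.
Variables (R : realType) (n : nat) (x : 'I_n.+1 -> 'I_n.+1 -> R).
Variable H : seq {set 'I_n}.
Hypotheses (H_route : partial_route H) (x_sub : inXsub x).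

Local Notation l := (size H).
Let x_ge0 := inXsub_ge0 x_sub.

Lemma size_route_gt0 : (0 < l)%N.
Proof. by case: H_route. Qed.

Lemma Hs_neq0 t : (t < l)%N -> Hs H t != set0.
Proof. by case: H_route => _ [+ _]; apply. Qed.

Lemma Hs_disjoint t1 t2 : (t1 < l)%N -> (t2 < l)%N -> t1 <> t2 ->
  [disjoint Hs H t1 & Hs H t2].
Proof. by case: H_route => _ [_ [+ _]]; apply. Qed.

Lemma Hs_adj_set1 t : (t.+1 < l)%N ->
  (exists u, Hs H t = [set u]) \/ (exists u, Hs H t.+1 = [set u]).
Proof.
by case: H_route => _ [_ [_ +]] tl => /(_ t tl) [] /eqP/cards1P; [left|right].
Qed.

Lemma Hs_default t : (l <= t)%N -> Hs H t = set0.
Proof. exact: nth_default. Qed.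

Lemma Hs_set1_notin t t' u : (t < l)%N -> (t' < l)%N -> t <> t' ->
  Hs H t = [set u] -> u \notin Hs H t'.
Proof.
move=> tl t'l tt' Hu; apply/negP => ut'.
by have := Hs_disjoint tl t'l tt'; rewrite Hu disjoints1 ut'.
Qed.

Lemma xE_le_card (A : {set 'I_n}) : A != set0 -> xE x A <= #|A|%:R - 1.
Proof. by case: x_sub => _ [_]; apply. Qed.

Lemma xdelta_set1 v : xdelta x [set cv v] = 2.
Proof. by case: x_sub => _ [+ _]; apply. Qed.

Definition xHsub i j : R :=
  \sum_(i <= t < j.+1) xE x (Hs H t) + \sum_(i <= t < j) xEST x (Hs H t) (Hs H t.+1).

Lemma xHsub_split i m j : (i <= m < j)%N ->
  xHsub i j = xHsub i m + xEST x (Hs H m) (Hs H m.+1) + xHsub m.+1 j.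
Proof.
case/andP=> im mj; rewrite /xHsub (big_cat_nat _ (n:=m.+1)) //=; try lia.
rewrite [\sum_(i <= t < j) _](big_cat_nat _ (n:=m)) //=; try lia.
rewrite [\sum_(m <= t < j) _](big_cat_nat _ (n:=m.+1)) //= ?big_nat1; try lia.
ring.
Qed.

Lemma xHsub_id i : xHsub i i = xE x (Hs H i).
Proof. by rewrite /xHsub big_nat1 big_geq // addr0. Qed.

Lemma xH_xHsub : xH x H = xHsub 0 l.-1.
Proof. by rewrite /xH /xHsub prednK // size_route_gt0. Qed.

Lemma mem_VHsub v i j :
  (v \in VHsub H i j) = has (fun t => v \in Hs H t) (index_iota i j.+1).
Proof.
by rewrite (big_morph (fun A : {set 'I_n} => v \in A) (in_setU v) (in_set0 v)) big_has.
Qed.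

Lemma VHsub_split i m j : (i <= m < j)%N ->
  VHsub H i j = VHsub H i m :|: VHsub H m.+1 j.
Proof. by case/andP=> im mj; rewrite /VHsub (big_cat_nat _ (n:=m.+1)) //; lia. Qed.

Lemma VHsub_id i : VHsub H i i = Hs H i.
Proof. by rewrite /VHsub big_nat1. Qed.

Lemma Hs_sub_VHsub t i j : (i <= t <= j)%N -> Hs H t \subset VHsub H i j.
Proof.
move=> itj; apply/subsetP => v vt; rewrite mem_VHsub; apply/hasP.
by exists t; rewrite // mem_index_iota ltnS.
Qed.

Lemma VHsub_neq0 i j : (i <= j < l)%N -> VHsub H i j != set0.
Proof.
case/andP=> ij jl; apply: contraNneq (Hs_neq0 (leq_ltn_trans ij jl)) => V0.
by rewrite -subset0 -V0 Hs_sub_VHsub // leqnn.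
Qed.

Lemma VHsub_disjoint i m j : [disjoint VHsub H i m & VHsub H m.+1 j].
Proof.
rewrite -setI_eq0; apply/eqP/setP => v; rewrite !inE !mem_VHsub.
apply/negP => /andP[/hasP[t1 + v1] /hasP[t2 + v2]].
rewrite !mem_index_iota => /andP[_ t1m] /andP[mt2 _].
have [t1l|] := ltnP t1 l; last by move/Hs_default => E; rewrite E inE in v1.
have [t2l|] := ltnP t2 l; last by move/Hs_default => E; rewrite E inE in v2.
have t12 : t1 <> t2 by lia.
by rewrite (disjointFr (Hs_disjoint t1l t2l t12) v1) in v2.
Qed.

Lemma card_VHsub_split i m j : (i <= m < j)%N ->
  #|VHsub H i j| = (#|VHsub H i m| + #|VHsub H m.+1 j|)%N.
Proof.
by move=> imj; rewrite (VHsub_split imj) cardsU disjoint_setI0 ?VHsub_disjoint ?cards0 ?subn0.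
Qed.

Lemma xHsub_le_xE i j : (i <= j)%N -> xHsub i j <= xE x (VHsub H i j).
Proof.
elim: j => [|j IH]; first by rewrite leqn0 => /eqP->; rewrite xHsub_id VHsub_id.
rewrite leq_eqVlt => /orP[/eqP<-|]; first by rewrite xHsub_id VHsub_id.
rewrite ltnS => ij; have ijj : (i <= j < j.+1)%N by rewrite ij ltnSn.
rewrite (xHsub_split ijj) (VHsub_split ijj) xHsub_id VHsub_id.
apply: le_trans (xE_setU x_ge0 _); last by rewrite -VHsub_id VHsub_disjoint.
by rewrite lerD2r lerD ?IH // ler_xEST // Hs_sub_VHsub // ij leqnn.
Qed.

Lemma xHsub_le_card i j : (i <= j < l)%N -> xHsub i j <= #|VHsub H i j|%:R - 1.
Proof.
by move=> ijl; rewrite (le_trans (xHsub_le_xE _)) ?xE_le_card ?VHsub_neq0 //; case/andP: ijl.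
Qed.

Definition slack (A : {set 'I_n}) : R := #|A|%:R - 1 - xE x A.

Lemma slack_ge0 (A : {set 'I_n}) : A != set0 -> 0 <= slack A.
Proof. by move=> A0; rewrite subr_ge0 xE_le_card. Qed.

Lemma xEST_set1_le_slack (A : {set 'I_n}) u : u \notin A -> xEST x [set u] A <= 1 + slack A.
Proof.
move=> uA; have := xE_setU x_ge0 (_ : [disjoint [set u] & A]).
rewrite disjoints1 xE_set1 add0r => /(_ uA) hU.
have : u |: A != set0 by apply/set0Pn; exists u; rewrite !inE eqxx.
move/xE_le_card; rewrite cardsU1 uA add1n -addn1 natrD /slack; lra.
Qed.

Lemma xH_prefix_le i : (i.+1 < l)%N ->
  xHsub 0 i + xEST x (Hs H i) (Hs H i.+1) <=
  #|VHsub H 0 i|%:R + (if i == 0%N then slack (Hs H 1) else 0).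
Proof.
move=> il; have i_l : (i < l)%N by lia.
have [[u Hu]|[z Hz]] := Hs_adj_set1 il; last first.
  have ii1 : (0 <= i < i.+1)%N by lia.
  have := xHsub_le_card (i := 0) (j := i.+1); rewrite il => /(_ isT).
  rewrite (xHsub_split ii1) (card_VHsub_split ii1) xHsub_id VHsub_id Hz.
  rewrite xE_set1 cards1 natrD addr0 -Hz => bnd.
  apply: le_trans bnd _; rewrite addrK lerDl.
  by case: ifP => // /eqP i0; apply: slack_ge0; apply: Hs_neq0; rewrite -i0.
have u_next : u \notin Hs H i.+1 by apply: Hs_set1_notin Hu => //; lia.
case: i il i_l Hu u_next => [|i] il i_l Hu u_next.
  by rewrite eqxx xHsub_id VHsub_id Hu xE_set1 cards1 add0r xEST_set1_le_slack.
have ii1 : (0 <= i < i.+1)%N by lia.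
rewrite (xHsub_split ii1) (card_VHsub_split ii1) xHsub_id VHsub_id Hu.
rewrite xE_set1 cards1 addr0 natrD /=.
have := xHsub_le_card (i := 0) (j := i) ltac:(lia).
have u_prev : u \notin Hs H i by apply: Hs_set1_notin Hu; lia.
have dj : [disjoint Hs H i & Hs H i.+2] by apply: Hs_disjoint; lia.
have := xEST_set1_le_xdelta x_ge0 u_prev u_next dj.
rewrite xdelta_set1 [xEST x (Hs H i) _]xESTC; lra.
Qed.

Lemma xH_suffix_le j : (j.+1 < l)%N ->
  xEST x (Hs H j) (Hs H j.+1) + xHsub j.+1 l.-1 <=
  #|VHsub H j.+1 l.-1|%:R + (if j.+2 == l then slack (Hs H j) else 0).
Proof.
move=> jl; have j_l : (j < l)%N by lia.
have [[u Hu]|[z Hz]] := Hs_adj_set1 jl.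
  have jj : (j <= j < l.-1)%N by lia.
  have := xHsub_le_card (i := j) (j := l.-1) ltac:(lia).
  rewrite (xHsub_split jj) (card_VHsub_split jj) xHsub_id VHsub_id Hu.
  rewrite xE_set1 cards1 natrD add0r -Hu => bnd.
  apply: le_trans bnd _; rewrite addrC addKr lerDl.
  by case: ifP => // _; apply: slack_ge0; apply: Hs_neq0.
have z_prev : z \notin Hs H j by apply: Hs_set1_notin Hz; lia.
have [jl2|jl2] := eqVneq j.+2 l.
  rewrite (_ : l.-1 = j.+1) -?jl2 // xHsub_id VHsub_id Hz.
  by rewrite xE_set1 cards1 addr0 xESTC xEST_set1_le_slack.
have j1l : (j.+1 <= j.+1 < l.-1)%N by lia.
rewrite (xHsub_split j1l) (card_VHsub_split j1l) xHsub_id VHsub_id Hz.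
rewrite xE_set1 cards1 add0r natrD.
have := xHsub_le_card (i := j.+2) (j := l.-1) ltac:(lia).
have z_next : z \notin Hs H j.+2 by apply: Hs_set1_notin Hz; lia.
have dj : [disjoint Hs H j & Hs H j.+2] by apply: Hs_disjoint; lia.
have := xEST_set1_le_xdelta x_ge0 z_prev z_next dj.
rewrite xdelta_set1 [xEST x (Hs H j) _]xESTC; lra.
Qed.

Lemma xHsub_drop_prefix i j : (i <= j < l)%N ->
  xHsub 0 j - xHsub i j <=
  #|VHsub H 0 j|%:R - #|VHsub H i j|%:R + (if i == 1%N then slack (Hs H 1) else 0).
Proof.
case: i => [|i] ijl; first by rewrite !subrr addr0.
have sp : (0 <= i < j)%N by lia.
rewrite (xHsub_split sp) (card_VHsub_split sp) natrD.
have := xH_prefix_le (i := i) ltac:(lia); rewrite (_ : (i.+1 == 1)%N = (i == 0)%N) //.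
lra.
Qed.

Lemma xHsub_drop_suffix i j : (i <= j < l)%N ->
  xHsub i l.-1 - xHsub i j <=
  #|VHsub H i l.-1|%:R - #|VHsub H i j|%:R + (if j.+2 == l then slack (Hs H j) else 0).
Proof.
move=> ijl; have [jl|jl] := ltnP j.+1 l; last first.
  by rewrite (_ : l.-1 = j) ?ifN ?subrr ?addr0 //; lia.
have sp : (i <= j < l.-1)%N by lia.
rewrite (xHsub_split sp) (card_VHsub_split sp) natrD.
have := xH_suffix_le jl; lra.
Qed.

Definition end_index t := (t == 1)%N || (t.+2 == l)%N.

Definition end_slack : R := \sum_(0 <= t < l | end_index t) slack (Hs H t).

Definition defect : R := #|VH H|%:R - 1 - xH x H + end_slack.

Lemma WOF_defect : WOF x H = 1 - defect.
Proof.
rewrite /WOF /defect /end_slack /end_index.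
rewrite (eq_bigr (fun t => - slack (Hs H t))) => [|t _]; last by rewrite /slack; ring.
rewrite sumrN; ring.
Qed.

Lemma end_slackE :
  end_slack = \sum_(t < l | end_index t) slack (Hs H t).
Proof. by rewrite /end_slack big_mkord. Qed.

Lemma end_slack_ge0 : 0 <= end_slack.
Proof. by rewrite end_slackE sumr_ge0 // => t _; rewrite slack_ge0 ?Hs_neq0. Qed.

Lemma slack_le_end_slack t : (t < l)%N -> end_index t -> slack (Hs H t) <= end_slack.
Proof.
move=> tl et; rewrite end_slackE (bigD1 (Ordinal tl)) //= lerDl.
by rewrite sumr_ge0 // => t' _; rewrite slack_ge0 ?Hs_neq0.
Qed.

Lemma slack2_le_end_slack t1 t2 : (t1 < l)%N -> (t2 < l)%N ->
  end_index t1 -> end_index t2 -> t1 != t2 ->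
  slack (Hs H t1) + slack (Hs H t2) <= end_slack.
Proof.
move=> t1l t2l e1 e2 t12; rewrite end_slackE (bigD1 (Ordinal t1l)) //= lerD2l.
rewrite (bigD1 (Ordinal t2l)) /=; last by rewrite e2 -val_eqE /= eq_sym.
by rewrite lerDl sumr_ge0 // => t _; rewrite slack_ge0 ?Hs_neq0.
Qed.

Lemma xH_le_card : xH x H <= #|VH H|%:R - 1.
Proof. by rewrite xH_xHsub xHsub_le_card //; have := size_route_gt0; lia. Qed.

Lemma defect_ge0 : 0 <= defect.
Proof. by have := xH_le_card; have := end_slack_ge0; rewrite /defect; lra. Qed.

Lemma slack_VHsub_le_defect i j : (i <= j < l)%N -> slack (VHsub H i j) <= defect.
Proof.
move=> ijl; have l0 := size_route_gt0.
have [/andP[/eqP eij ei]|not_end] := boolP ((i == j) && end_index i).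
  rewrite -eij VHsub_id; apply: le_trans (slack_le_end_slack _ ei) _; first by lia.
  by have := xH_le_card; rewrite /defect; lra.
have ends : (if i == 1%N then slack (Hs H 1) else 0) +
            (if j.+2 == l then slack (Hs H j) else 0) <= end_slack.
  have [i1|i1] := eqVneq i 1%N; have [j2|j2] := eqVneq j.+2 l.
  - apply: slack2_le_end_slack; rewrite /end_index ?eqxx ?j2 ?orbT //; try lia.
    by apply: contraNneq not_end => j1; rewrite i1 -j1 /end_index eqxx.
  - by rewrite addr0 slack_le_end_slack //; lia.
  - by rewrite add0r slack_le_end_slack ?/end_index ?j2 ?orbT //; lia.
  - by rewrite addr0 end_slack_ge0.
have := xHsub_drop_prefix (i := i) (j := l.-1) ltac:(lia).
have := xHsub_drop_suffix ijl.
have := xHsub_le_xE (i := i) (j := j) ltac:(lia).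
move: ends; rewrite /defect /slack /VH xH_xHsub; lra.
Qed.

End PartialRoute.

Lemma int_le_add_scaled (R : realFieldType) (K : int) (B : nat) (Y U tau : R) :
  0 <= tau < 1 -> Y <= B%:R -> 0 <= U -> K%:~R - tau <= Y + U ->
  K%:~R <= B%:R + U / (1 - tau).
Proof.
case/andP=> tau0 tau1 YB U0 KYU; have tau1' : 0 < 1 - tau by rewrite subr_gt0.
have [KB|BK] := lerP K B%:Z.
  apply: le_trans (_ : B%:R <= _); last by rewrite lerDl divr_ge0 // ltW.
  by move: KB; rewrite -(ler_int R).
(* [K - B] is an integer, hence at least [1]. *)
have KB1 : 1 <= K%:~R - B%:R :> R.
  have : (1 <= K - B%:Z)%R by lia.
  by rewrite -(ler_int R) intrB.
have : (K%:~R - B%:R) * (1 - tau) <= U.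
  have : 0 <= (K%:~R - B%:R - 1) * tau by rewrite mulr_ge0 // subr_ge0.
  have -> : (K%:~R - B%:R) * (1 - tau) = K%:~R - B%:R - (K%:~R - B%:R - 1) * tau - tau.
    by ring.
  lra.
by rewrite -ler_pdivlMr //; lra.
Qed.

Section LowerBoundLP.
Variables (R : realType) (n N : nat) (C : rat) (d : 'I_N -> 'I_n -> rat).
Variables (w : 'I_n -> rat) (b : 'I_n -> nat) (H : seq {set 'I_n}) (xi : 'I_N).
Hypothesis w_ge0 : forall v, 0 <= w v.

Local Notation L := (Lstar_xi R C d w b H xi).
Local Notation l := (size H).

Lemma ratr_w_ge0 v : 0 <= (ratr (w v) : R).
Proof. by rewrite ler0q. Qed.

Lemma Lstar_xi_le y : Lfeas C d b H xi y -> L <= \sum_(v in VH H) ratr (w v) * y v.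
Proof.
move=> y_feas; apply: ge_inf; last by exists y.
exists 0 => _ [y' [[_ [_ y'_ge0]] ->]].
by rewrite sumr_ge0 // => v _; rewrite mulr_ge0 ?ratr_w_ge0.
Qed.

Lemma Lstar_xi_infeasible : ~ (exists y : 'I_n -> R, Lfeas C d b H xi y) -> L = 0.
Proof.
by move=> infeas; rewrite /Lstar_xi inf_out // => -[[_ [y [y_feas _]]] _]; apply: infeas; exists y.
Qed.

Lemma Lstar_xi_ge0 : 0 <= L.
Proof.
have [[y y_feas]|/Lstar_xi_infeasible -> //] :=
  boolp.pselect (exists y : 'I_n -> R, Lfeas C d b H xi y).
apply: lb_le_inf; first by exists (\sum_(v in VH H) ratr (w v) * y v), y.
move=> _ [y' [[_ [_ y'_ge0]] ->]].
by rewrite sumr_ge0 // => v _; rewrite mulr_ge0 ?ratr_w_ge0.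
Qed.

Lemma Lfeas_scaled tau (y : 'I_n -> R) : 0 <= tau < 1 ->
  (forall v, 0 <= y v <= (b v)%:R) ->
  (forall i j, (i <= j)%N -> (j < l)%N ->
     (kxi C d xi (VHsub H i j))%:~R - 1 - tau <= \sum_(v in VHsub H i j) y v) ->
  Lfeas C d b H xi (fun v => Num.min (y v / (1 - tau)) (b v)%:R).
Proof.
move=> /andP[tau0 tau1] y_bnd y_cov; have tau1' : 0 < 1 - tau by rewrite subr_gt0.
split; last split; last first.
- by move=> v; case/andP: (y_bnd v) => y0 _; rewrite le_min ler0n andbT divr_ge0 // ltW.
- by move=> v; rewrite ge_min lexx orbT.
move=> i j ij jl; set A := VHsub H i j; set K := kxi C d xi A.
have -> : K%:~R - 1 = (K - 1)%:~R :> R by rewrite intrB.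
pose capped v := (b v)%:R < y v / (1 - tau).
rewrite (bigID capped) /=.
rewrite (eq_bigr (fun v => (b v)%:R)) => [|v /andP[_ cv]]; last by rewrite min_r ?ltW.
rewrite [X in _ <= _ + X](eq_bigr (fun v => y v / (1 - tau))) => [|v /andP[_ cv]];
  last by rewrite min_l // leNgt.
rewrite -natr_sum -mulr_suml.
apply: (int_le_add_scaled (Y := \sum_(v in A | capped v) y v)); first by rewrite tau0.
- by rewrite natr_sum ler_sum // => v _; case/andP: (y_bnd v).
- by rewrite sumr_ge0 // => v _; case/andP: (y_bnd v).
- by rewrite intrB -(bigID capped) /=; apply: y_cov.
Qed.

Lemma Lstar_xi_scaled_le tau (y : 'I_n -> R) : 0 <= tau <= 1 ->
  (forall v, 0 <= y v <= (b v)%:R) ->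
  (forall i j, (i <= j)%N -> (j < l)%N ->
     (kxi C d xi (VHsub H i j))%:~R - 1 - tau <= \sum_(v in VHsub H i j) y v) ->
  (1 - tau) * L <= \sum_(v in VH H) ratr (w v) * y v.
Proof.
move=> /andP[tau0 tau1] y_bnd y_cov.
have [->|tau_neq1] := eqVneq tau 1.
  rewrite subrr mul0r sumr_ge0 // => v _.
  by rewrite mulr_ge0 ?ratr_w_ge0 //; case/andP: (y_bnd v).
have tau_lt1 : tau < 1 by rewrite lt_neqAle tau_neq1.
have tau1' : 0 < 1 - tau by rewrite subr_gt0.
have /Lstar_xi_le bnd := Lfeas_scaled (tau := tau) ltac:(lra) y_bnd y_cov.
rewrite mulrC -ler_pdivlMr // mulr_suml; apply: le_trans bnd _.
apply: ler_sum => v _; rewrite -[ratr (w v) * y v / _]mulrA.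
by apply: ler_wpM2l; rewrite ?ratr_w_ge0 // ge_min lexx.
Qed.

Definition ext_ord (g : 'I_n -> R) (q : nat) : R :=
  if insub q is Some v then g v else 0.

Lemma ext_ord_val g (v : 'I_n) : ext_ord g v = g v.
Proof. by rewrite /ext_ord valK. Qed.

Lemma dotv_ext_ord (g : 'I_n -> R) (t : R) (Y : nat -> R) :
  dotv n.+1 (fun q => if q == n then t else ext_ord g q) Y = \sum_v g v * Y v + t * Y n.
Proof.
rewrite dotvS eqxx; congr (_ + _); apply: eq_bigr => v _.
by rewrite ltn_eqF ?ext_ord_val.
Qed.

Lemma sum_indicator (A : {set 'I_n}) (F : 'I_n -> R) :
  \sum_v (v \in A)%:R * F v = \sum_(v in A) F v.
Proof.
rewrite [RHS]big_mkcond; apply: eq_bigr => v _.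
by case: (v \in A); rewrite ?mul1r ?mul0r.
Qed.

Local Notation kk i j := ((kxi C d xi (VHsub H i j))%:~R - 1 : R).

(* The LP [min w.y + L tau] over [0 <= y <= b], [0 <= tau <= 1] and
   [y(V(H')) + tau >= k(V(H')) - 1], with [y] at the indices [v < n] and [tau]
   at index [n].  Row [inl (inl (i, j))] is the covering constraint of
   [VHsub H i j] (void unless [i <= j]), row [inl (inr (v, true))] is
   [y v <= b v], [inl (inr (v, false))] is [0 <= y v], [inr true] is
   [0 <= tau] and [inr false] is [tau <= 1]. *)
Definition lp_index := (('I_l * 'I_l + 'I_n * bool) + bool)%type.

Definition lp_coef (k : lp_index) : 'I_n -> R :=
  match k with
  | inl (inl (i, j)) => fun v => (i <= j)%:R * (v \in VHsub H i j)%:R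
  | inl (inr (u, true)) => fun v => - (v == u)%:R
  | inl (inr (u, false)) => fun v => (v == u)%:R
  | inr _ => fun _ => 0
  end.

Definition lp_tau (k : lp_index) : R :=
  match k with
  | inl (inl (i, j)) => (i <= j)%:R
  | inl (inr _) => 0
  | inr true => 1
  | inr false => -1
  end.

Definition lp_row (k : lp_index) (q : nat) : R :=
  if q == n then lp_tau k else ext_ord (lp_coef k) q.

Definition lp_rhs (k : lp_index) : R :=
  match k with
  | inl (inl (i, j)) => (i <= j)%:R * kk i j
  | inl (inr (u, true)) => - (b u)%:R
  | inl (inr (u, false)) => 0
  | inr true => 0
  | inr false => -1
  end.

Definition lp_obj (q : nat) : R :=
  if q == n then L else ext_ord (fun v => (v \in VH H)%:R * ratr (w v)) q.

Lemma sum_lp_index (F : lp_index -> R) : \sum_k F k =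
  \sum_ij F (inl (inl ij)) + \sum_v (F (inl (inr (v, true))) + F (inl (inr (v, false))))
  + (F (inr true) + F (inr false)).
Proof.
rewrite !big_sumType big_bool /=; congr (_ + _ + _).
rewrite [RHS](eq_bigr (fun v => \sum_bo F (inl (inr (v, bo))))) => [|v _];
  last by rewrite big_bool.
by rewrite pair_big /=; apply: eq_bigr => -[].
Qed.

Lemma lp_feasible : (exists y : 'I_n -> R, Lfeas C d b H xi y) ->
  exists Y, forall k, lp_rhs k <= dotv n.+1 (lp_row k) Y.
Proof.
move=> [y [y_cov [y_le y_ge0]]].
exists (fun q => if q == n then 0 else ext_ord y q) => k.
rewrite /lp_row dotv_ext_ord eqxx mulr0 addr0.
under eq_bigr => v _ do rewrite ltn_eqF ?ext_ord_val //.
case: k => [[[i j]|[u []]]|[]] /=.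
- case: leqP => ij; last by rewrite !mul0r big1 // => v _; rewrite !mul0r.
  under eq_bigr => v _ do rewrite mul1r.
  by rewrite mul1r sum_indicator y_cov.
- under eq_bigr => v _ do rewrite mulNr.
  by rewrite sumrN sum_pred1_mul lerN2.
- by rewrite sum_pred1_mul.
- by rewrite big1 // => v _; rewrite mul0r.
- by rewrite big1 ?lerN10 // => v _; rewrite mul0r.
Qed.

Lemma Lstar_xi_le_lp_obj Y : (forall k, lp_rhs k <= dotv n.+1 (lp_row k) Y) ->
  L <= dotv n.+1 lp_obj Y.
Proof.
move=> Y_feas.
have row k : dotv n.+1 (lp_row k) Y = \sum_v lp_coef k v * Y v + lp_tau k * Y n.
  exact: dotv_ext_ord.
have sum0 : \sum_(v < n) (0 : R) * Y v = 0 by rewrite big1 // => v _; rewrite mul0r.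
have tau0 : 0 <= Y n by have := Y_feas (inr true); rewrite row /= sum0 add0r mul1r.
have tau1 : Y n <= 1.
  by have := Y_feas (inr false); rewrite row /= sum0 add0r mulN1r lerN2.
have Y_bnd (v : 'I_n) : 0 <= Y v <= (b v)%:R.
  apply/andP; split.
    by have := Y_feas (inl (inr (v, false))); rewrite row /= mul0r addr0 sum_pred1_mul.
  have := Y_feas (inl (inr (v, true))); rewrite row /= mul0r addr0.
  by under eq_bigr => u _ do rewrite mulNr; rewrite sumrN sum_pred1_mul lerN2.
have Y_cov i j : (i <= j)%N -> (j < l)%N -> kk i j - Y n <= \sum_(v in VHsub H i j) Y v.
  move=> ij jl; have il : (i < l)%N by apply: leq_ltn_trans ij jl.
  have := Y_feas (inl (inl (Ordinal il, Ordinal jl))); rewrite row /= ij mul1r.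
  under eq_bigr => v _ do rewrite mul1r.
  by rewrite sum_indicator mul1r; lra.
have scaled := Lstar_xi_scaled_le (tau := Y n) (y := Y) ltac:(lra) Y_bnd Y_cov.
rewrite /lp_obj dotv_ext_ord.
rewrite (eq_bigr (fun v => (v \in VH H)%:R * (ratr (w v) * Y v))) => [|v _].
  by rewrite sum_indicator; lra.
by rewrite mulrA.
Qed.

(* [pi], [sg] and [rho] are the dual variables of the covering rows, of
   [y <= b] and of [tau <= 1]; the dual constraints of [y] and [tau] are
   inequalities because the dual variables of [y >= 0] and [tau >= 0] are
   dropped. *)
Definition dual_certificate (pi : 'I_l * 'I_l -> R) (sg : 'I_n -> R) (rho : R) :=
  [/\ forall ij, 0 <= pi ij, forall v, 0 <= sg v, 0 <= rho,
      forall ij, pi ij != 0 -> (ij.1 <= ij.2)%N &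
  [/\ forall v, \sum_ij pi ij * (v \in VHsub H ij.1 ij.2)%:R - sg v
                  <= (v \in VH H)%:R * ratr (w v),
      \sum_ij pi ij <= L + rho &
      L + rho <= \sum_ij pi ij * kk ij.1 ij.2 - \sum_v sg v * (b v)%:R]].

Lemma dual_certificate0 : L = 0 -> dual_certificate (fun _ => 0) (fun _ => 0) 0.
Proof.
move=> L0; rewrite /dual_certificate L0 addr0.
split=> //; first by move=> ij; rewrite eqxx.
split; last by rewrite !big1 ?subr0 // => *; rewrite mul0r.
  by move=> v; rewrite big1 ?subr0 => [|ij _]; rewrite ?mul0r // mulr_ge0 ?ler0n ?ratr_w_ge0.
by rewrite big1.
Qed.

Lemma Lstar_xi_dual : exists pi sg rho, dual_certificate pi sg rho.
Proof.
have [feas|/Lstar_xi_infeasible/dual_certificate0 cert0] :=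
  boolp.pselect (exists y : 'I_n -> R, Lfeas C d b H xi y);
  last by exists (fun _ => 0), (fun _ => 0), 0.
have [lam [lam_ge0 lam_col lam_rhs]] := farkas_affine (lp_feasible feas) Lstar_xi_le_lp_obj.
pose pi ij := lam (inl (inl ij)) * (ij.1 <= ij.2)%:R.
pose sg v := lam (inl (inr (v, true))).
exists pi, sg, (lam (inr false)).
have pick v (F : 'I_n -> R) : \sum_u F u * (v == u)%:R = F v.
  by rewrite -[RHS](sum_pred1_mul v); apply: eq_bigr => u _; rewrite mulrC eq_sym.
have col_y (v : 'I_n) : \sum_ij pi ij * (v \in VHsub H ij.1 ij.2)%:R - sg v
                        + lam (inl (inr (v, false))) = (v \in VH H)%:R * ratr (w v).
  have := lam_col v (leqW (ltn_ord v)); rewrite /lp_obj ltn_eqF // ext_ord_val => <-.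
  rewrite (eq_bigr (fun k => lam k * lp_coef k v)) => [|k _]; last first.
    by rewrite /lp_row ltn_eqF // ext_ord_val.
  rewrite sum_lp_index /= !mulr0 addr0 big_split /=.
  rewrite (eq_bigr (fun u => - (sg u * (v == u)%:R))) => [|u _]; last by rewrite mulrN.
  rewrite sumrN !pick addr0 addrA; congr (_ + _ + _); apply: eq_bigr => -[i j] _.
  by rewrite /pi mulrA.
have col_tau : \sum_ij pi ij + lam (inr true) - lam (inr false) = L.
  have := lam_col n (ltnSn n); rewrite /lp_obj eqxx => <-.
  rewrite (eq_bigr (fun k => lam k * lp_tau k)) => [|k _]; last by rewrite /lp_row eqxx.
  rewrite sum_lp_index /=.
  under [X in _ = _ + X + _]eq_bigr => u _ do rewrite !mulr0 addr0.
  rewrite big1_eq addr0 mulr1 mulrN1 addrA; congr (_ + _ - _).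
  by apply: eq_bigr => -[i j] _.
have rhs : L <= \sum_ij pi ij * kk ij.1 ij.2 - \sum_v sg v * (b v)%:R - lam (inr false).
  move: lam_rhs; rewrite sum_lp_index /= mulr0 add0r mulrN1.
  rewrite (eq_bigr (fun v => - (sg v * (b v)%:R))) => [|v _]; last by rewrite mulr0 addr0 mulrN.
  rewrite sumrN (eq_bigr (fun ij => pi ij * kk ij.1 ij.2)) // => -[i j] _.
  by rewrite /pi /= mulrA.
split.
- by move=> ij; rewrite mulr_ge0 ?ler0n.
- by move=> v; apply: lam_ge0.
- exact: lam_ge0.
- by move=> [i j]; rewrite /pi /=; case: leqP => //; rewrite mulr0 eqxx.
split.
- by move=> v; rewrite -col_y lerDl.
- by have := lam_ge0 (inr true); lra.
- lra.
Qed.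

End LowerBoundLP.

Lemma inX_sub (R : realType) n N C d (p : 'I_N -> R) cvrp k (x : 'I_n.+1 -> 'I_n.+1 -> R) :
  inX C d p cvrp k x -> inXsub x.
Proof. by case: cvrp => // -[]. Qed.

Section Validity.
Variables (R : realType) (n N : nat) (C : rat) (d : 'I_N -> 'I_n -> rat).
Variables (p : 'I_N -> R) (w : 'I_n -> rat) (b : 'I_n -> nat) (H : seq {set 'I_n}).
Hypotheses (p_ge0 : forall xi, 0 <= p xi) (w_ge0 : forall v, 0 <= w v).
Hypothesis H_route : partial_route H.

Local Notation Lstar := (Lstar C d p w b H).

Lemma Lstar_ge0 : 0 <= Lstar.
Proof. by rewrite sumr_ge0 // => xi _; rewrite mulr_ge0 ?Lstar_xi_ge0. Qed.

Lemma Lstar_WOF_nonpos_le x (theta : 'I_n -> R) : (forall v, 0 <= theta v) ->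
  WOF x H <= 0 -> Lstar * WOF x H <= \sum_(v in VH H) theta v.
Proof.
move=> theta_ge0 W0; apply: le_trans (_ : 0 <= _); last exact: sumr_ge0.
by rewrite mulr_ge0_le0 ?Lstar_ge0.
Qed.

Lemma inP_Lstar_WOF_le cvrp k x theta :
  inP C d p w b cvrp k x theta -> Lstar * WOF x H <= \sum_(v in VH H) theta v.
Proof.
move=> [/inX_sub x_sub [y [y_bnd [y_cov [theta_ge0 theta_ge]]]]].
have [W0|W_gt0] := lerP (WOF x H) 0; first exact: Lstar_WOF_nonpos_le.
have scenario xi : WOF x H * Lstar_xi R C d w b H xi <= \sum_(v in VH H) ratr (w v) * y xi v.
  rewrite WOF_defect; apply: Lstar_xi_scaled_le => //.
    by rewrite defect_ge0 // -subr_ge0 -WOF_defect ltW.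
  move=> i j ij jl; have ijl : (i <= j < size H)%N by rewrite ij.
  have := y_cov xi _ (VHsub_neq0 H_route ijl).
  by have := slack_VHsub_le_defect H_route x_sub ijl; rewrite /slack; lra.
apply: le_trans (_ : \sum_(v in VH H) \sum_xi p xi * ratr (w v) * y xi v <= _); last first.
  exact: ler_sum.
rewrite exchange_big /= /Lstar mulr_suml; apply: ler_sum => xi _.
under eq_bigr => v _ do rewrite -mulrA.
by rewrite -mulr_sumr mulrAC -mulrA ler_wpM2l // mulrC.
Qed.

End Validity.

Lemma sum_set_pred1 n (R : realType) (A : {set 'I_n}) (G : {set 'I_n} -> R) :
  \sum_(S : {set 'I_n} | S != set0) (A == S)%:R * G S = (A != set0)%:R * G A.
Proof.
have [A0|A0] := boolP (A != set0).
  rewrite (bigD1 A) //= eqxx !mul1r big1 ?addr0 // => S /andP[_ SA].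
  by rewrite eq_sym (negbTE SA) mul0r.
rewrite mul0r big1 // => S S0; case: eqP => [AS|_]; last by rewrite mul0r.
by move: S0; rewrite -AS (negbTE A0).
Qed.

Section Multipliers.
Variables (R : realType) (n N : nat) (C : rat) (d : 'I_N -> 'I_n -> rat).
Variables (p : 'I_N -> R) (w : 'I_n -> rat) (b : 'I_n -> nat) (H : seq {set 'I_n}).
Hypotheses (p_ge0 : forall xi, 0 <= p xi) (w_ge0 : forall v, 0 <= w v).
Hypothesis H_route : partial_route H.

Local Notation l := (size H).
Local Notation V ij := (VHsub H ij.1 ij.2).

Variables (pi : 'I_N -> 'I_l * 'I_l -> R) (sg : 'I_N -> 'I_n -> R) (rho : 'I_N -> R).
Hypothesis pi_sg_rho : forall xi, dual_certificate C d w b xi (pi xi) (sg xi) (rho xi).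

Definition alpha xi (S : {set 'I_n}) : R := p xi * \sum_ij pi xi ij * (V ij == S)%:R.

Definition beta xi v : R := - (p xi * sg xi v).

Lemma sum_alpha xi (G : {set 'I_n} -> R) :
  \sum_(S | S != set0) alpha xi S * G S = p xi * \sum_ij pi xi ij * G (V ij).
Proof.
have [pi_ge0 _ _ pi_supp _] := pi_sg_rho xi.
under eq_bigr => S _ do rewrite -mulrA mulr_suml.
rewrite -mulr_sumr exchange_big /=; congr (_ * _); apply: eq_bigr => ij _.
under eq_bigr => S _ do rewrite -mulrA.
rewrite -mulr_sumr sum_set_pred1.
have [->|pi0] := eqVneq (pi xi ij) 0; first by rewrite !mul0r.
by rewrite (VHsub_neq0 H_route) ?mul1r // pi_supp // ltn_ord.
Qed.

Lemma alpha_beta_column xi v :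
  beta xi v + \sum_(S | (S != set0) && (v \in S)) alpha xi S =
  p xi * (\sum_ij pi xi ij * (v \in V ij)%:R - sg xi v).
Proof.
rewrite big_mkcondr /= (eq_bigr (fun S => alpha xi S * (v \in S)%:R)) => [|S _]; last first.
  by case: (v \in S); rewrite ?mulr1 ?mulr0.
by rewrite sum_alpha /beta; ring.
Qed.

Lemma multipliers_inA : inA w alpha beta.
Proof.
split; [|split].
- move=> xi S _; have [pi_ge0 _ _ _ _] := pi_sg_rho xi.
  by rewrite mulr_ge0 // sumr_ge0 // => ij _; rewrite mulr_ge0 ?ler0n.
- by move=> xi v; have [_ sg_ge0 _ _ _] := pi_sg_rho xi; rewrite oppr_le0 mulr_ge0.
- move=> xi v wv0; have [_ _ _ _ [cover _ _]] := pi_sg_rho xi.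
  rewrite alpha_beta_column mulr_ge0_le0 //.
  by apply: le_trans (cover v) _; rewrite wv0 rmorph0 mulr0.
Qed.

Lemma phi_le_indicator v : 0 < w v -> phi p w alpha beta v <= (v \in VH H)%:R.
Proof.
move=> wv; apply: bigmax_le => [|xi _]; first by rewrite ler0n.
rewrite alpha_beta_column.
have [->|p0] := eqVneq (p xi) 0; first by rewrite !mul0r ler0n.
have pxi : 0 < p xi by rewrite lt_def p0 p_ge0.
have [_ _ _ _ [cover _ _]] := pi_sg_rho xi.
have wv' : 0 < (ratr (w v) : R) by rewrite ltr0q.
rewrite ler_pdivrMr ?(mulr_gt0 pxi wv') // mulrCA.
by apply: ler_wpM2l; [exact: ltW | exact: cover].
Qed.

Lemma proj_lhs_le (theta : 'I_n -> R) : (forall v, 0 <= theta v) ->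
  \sum_(v | 0 < w v) phi p w alpha beta v * theta v <= \sum_(v in VH H) theta v.
Proof.
move=> theta_ge0.
apply: le_trans (_ : \sum_(v | 0 < w v) (v \in VH H)%:R * theta v <= _).
  by apply: ler_sum => v wv; rewrite ler_wpM2r ?phi_le_indicator.
rewrite -sum_indicator [X in _ <= X](bigID (fun v => 0 < w v)) /= lerDl.
by rewrite sumr_ge0 // => v _; rewrite mulr_ge0 ?ler0n.
Qed.

Definition scenario_rhs x xi : R :=
  \sum_ij pi xi ij * (xE x (V ij) + ((kxi C d xi (V ij))%:~R - #|V ij|%:R))
  - \sum_v sg xi v * (b v)%:R.

Lemma proj_rhsE x :
  \sum_xi \sum_(S | S != set0) alpha xi S * xE x S + nu C d b alpha beta =
  \sum_xi p xi * scenario_rhs x xi.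
Proof.
rewrite /nu -!big_split /=; apply: eq_bigr => xi _.
rewrite !sum_alpha /beta /scenario_rhs.
under eq_bigr => v _ do rewrite mulNr -mulrA.
rewrite sumrN -mulr_sumr.
under [X in _ = _ * (X - _)]eq_bigr => ij _ do rewrite mulrDr.
by rewrite big_split /=; ring.
Qed.

Lemma scenario_rhs_ge x xi : inXsub x -> 0 <= WOF x H ->
  WOF x H * Lstar_xi R C d w b H xi <= scenario_rhs x xi.
Proof.
move=> x_sub; rewrite WOF_defect; set D := defect x H => D1.
have D0 : 0 <= D := defect_ge0 H_route x_sub.
have [pi_ge0 _ rho_ge0 pi_supp [_ sum_pi rhs]] := pi_sg_rho xi.
set L := Lstar_xi R C d w b H xi in sum_pi rhs *.
have cover : \sum_ij pi xi ij * ((kxi C d xi (V ij))%:~R - 1 - D) <=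
    \sum_ij pi xi ij * (xE x (V ij) + ((kxi C d xi (V ij))%:~R - #|V ij|%:R)).
  apply: ler_sum => ij _; have [->|pi0] := eqVneq (pi xi ij) 0; first by rewrite !mul0r.
  rewrite ler_wpM2l //.
  have := slack_VHsub_le_defect H_route x_sub (i := ij.1) (j := ij.2).
  by rewrite pi_supp // ltn_ord /slack -/D => /(_ isT); lra.
have split_D : \sum_ij pi xi ij * ((kxi C d xi (V ij))%:~R - 1 - D) =
    \sum_ij pi xi ij * ((kxi C d xi (V ij))%:~R - 1) - D * \sum_ij pi xi ij.
  by rewrite mulr_sumr -sumrB; apply: eq_bigr => ij _; ring.
have : D * \sum_ij pi xi ij <= D * (L + rho xi) by rewrite ler_wpM2l.
have : 0 <= (1 - D) * rho xi by rewrite mulr_ge0.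
rewrite /scenario_rhs; move: cover rhs; rewrite split_D; nra.
Qed.

Lemma multipliers_dominate x theta : inXsub x -> (forall v, 0 <= theta v) ->
  proj_ineq C d p w b alpha beta x theta ->
  Lstar C d p w b H * WOF x H <= \sum_(v in VH H) theta v.
Proof.
move=> x_sub theta_ge0 proj.
have [W0|W_gt0] := lerP (WOF x H) 0; first exact: (Lstar_WOF_nonpos_le _ _ _ p_ge0 w_ge0).
apply: le_trans (proj_lhs_le theta_ge0); apply: le_trans proj.
rewrite proj_rhsE /Lstar mulr_suml; apply: ler_sum => xi _.
by rewrite -mulrA ler_wpM2l // mulrC scenario_rhs_ge // ltW.
Qed.

End Multipliers.

Theorem theorem5 (R : realType) (n N : nat) (C : rat)
  (d : 'I_N -> 'I_n -> rat) (p : 'I_N -> R) (w : 'I_n -> rat) (b : 'I_n -> nat)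
  (k : nat) (cvrp : bool) (H : seq {set 'I_n}) :
  0 < C ->
  (forall xi v, 0 <= d xi v <= C) ->
  (forall xi, 0 <= p xi) -> \sum_xi p xi = 1 ->
  (forall v, 0 <= w v) ->
  b_ok R C d b ->
  partial_route H ->
  (exists (alpha : 'I_N -> {set 'I_n} -> R) (beta : 'I_N -> 'I_n -> R),
     inA w alpha beta /\
     forall xbar : 'I_n.+1 -> 'I_n.+1 -> R, inX C d p cvrp k xbar ->
     forall theta : 'I_n -> R, (forall v, 0 <= theta v) ->
       proj_ineq C d p w b alpha beta xbar theta ->
       \sum_(v in VH H) theta v >= Lstar C d p w b H * WOF xbar H)
  /\
  (forall (x : 'I_n.+1 -> 'I_n.+1 -> R) (theta : 'I_n -> R),
     inP C d p w b cvrp k x theta ->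
     \sum_(v in VH H) theta v >= Lstar C d p w b H * WOF x H).
Proof.
move=> _ _ p_ge0 _ w_ge0 _ H_route.
split; last by move=> x theta; apply: inP_Lstar_WOF_le.
have [pi /boolp.choice[sg /boolp.choice[rho cert]]] :=
  boolp.choice (fun xi => Lstar_xi_dual R C d b H xi w_ge0).
exists (alpha p pi), (beta p sg); split; first exact: multipliers_inA.
by move=> x /inX_sub x_sub theta theta_ge0; apply: multipliers_dominate.
Qed.
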